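(* Let $d$ and $k$ be integers with $2\le k\le d-2$ and let $\varepsilon\in(0,1)$. Set $r=\lceil k(d-k+1)/\varepsilon\rceil$. Then there is a positive integer $p_0=p_0(d,\varepsilon,k)$ such that for every prime $p\ge p_0$ there exists a subset $R\subseteq\mathbb{F}_p^{d-1}$ with $|R|\ge p^{d-k-\varepsilon}/2$ such that every $(k-1)$-dimensional affine subspace of $\mathbb{F}_p^{d-1}$ contains at most $r-1$ points of $R$.
   Context: $\mathbb{F}_p$ denotes the finite field with $p$ elements, and $\mathbb{F}_p^{d-1}$ the $(d-1)$-dimensional vector space over it; a $(k-1)$-dimensional affine subspace is a translate $x+L$ of a $(k-1)$-dimensional linear subspace $L$. *)

From HB Require Import structures.
From mathcomp Require Import all_boot all_order all_algebra.
From mathcomp Require Import all_classical all_reals all_analysis.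
Set Implicit Arguments. Unset Strict Implicit. Unset Printing Implicit Defensive.
Import Order.TTheory GRing.Theory Num.Theory.
Local Open Scope ring_scope.

Definition affine_sub (F : finFieldType) (n : nat) (x : 'rV[F]_n) (L : 'M[F]_n)
  : {set 'rV[F]_n} :=
  [set y : 'rV[F]_n | (y - x <= L)%MS].

Definition is_affine_subspace_dim (F : finFieldType) (n m : nat)
  (A : {set 'rV[F]_n}) : Prop :=
  exists (x : 'rV[F]_n) (L : 'M[F]_n), \rank L = m /\ A = affine_sub x L.

From HB Require Import structures.
From mathcomp Require Import all_boot all_order all_algebra.
From mathcomp Require Import all_classical all_reals all_analysis.
From mathcomp Require Import unstable zify ring lra.
(* Give the finite-set lemmas precedence over their [classical_sets] namesakes. *)
From mathcomp Require Import fintype finset.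
Import Order.TTheory GRing.Theory Num.Theory.
Set Implicit Arguments. Unset Strict Implicit. Unset Printing Implicit Defensive.
Local Open Scope ring_scope.

(* Let N = p ^ (d - 1) and pick a uniformly random s-subset S of F_p^(d-1) with
   s = floor (p ^ (d - k - eps)).  An r-set lying in a (k-1)-flat is a point
   together with an (r-1) x (d-1) matrix of rank <= k - 1 (the differences to
   that point), and there are at most 2 ^ (r-1) p ^ ((k-1)(d+r-k-1)) such
   matrices; each r-set lies in S with probability at most (s / (N - r)) ^ r.
   For r = ceil (k (d-k+1) / eps) the factor s ^ r <= p ^ ((d-k) r - k (d-k+1))
   makes the expected number of such r-sets in S smaller than 1 once p >= 4 ^ r,
   so some S meets every (k-1)-flat in fewer than r points. *)

Section LowRankMatrices.
Variable F : finFieldType.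
Local Notation q := #|F|.

Lemma card_rowspace_leq m n (A : 'M[F]_(m, n)) :
  (#|[set v : 'rV[F]_n | (v <= A)%MS]| <= q ^ \rank A)%N.
Proof.
apply: (@leq_trans #|[set u *m row_base A | u : 'rV[F]_(\rank A)]|).
  apply: subset_leq_card; apply/subsetP => v; rewrite inE => vA.
  have : (v <= row_base A)%MS by rewrite eq_row_base.
  by case/submxP => u ->; apply: imset_f; rewrite inE.
apply: leq_trans (leq_imset_card _ _) _.
by apply: leq_trans (max_card _) _; rewrite card_mx mul1n.
Qed.

Definition nb_low_rank m n D := #|[set M : 'M[F]_(m, n) | (\rank M <= D)%N]|.

Lemma nb_low_rank_leq_card m n D : (nb_low_rank m n D <= q ^ (m * n))%N.
Proof. by apply: leq_trans (max_card _) _; rewrite card_mx. Qed.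

(* Adding a row [v] on top of [A] keeps the rank [<= D] only if [rank A < D]
   or [v] lies in the row space of [A], which then has rank exactly [D]. *)
Lemma card_col_mx_rank_leq m n D (A : 'M[F]_(m, n)) :
  (#|[set v : 'rV[F]_n | (\rank (col_mx v A) <= D)%N]| <=
   (if (\rank A <= D)%N then q ^ D else 0) +
   (if (\rank A < D)%N then q ^ n else 0))%N.
Proof.
have rank_addr (v : 'rV[F]_n) : (\rank A <= \rank (col_mx v A))%N.
  by rewrite -addsmxE; apply: mxrankS; apply: addsmxSr.
case: (ltnP (\rank A) D) => [AD|DA].
  rewrite (ltnW AD) /=; apply: leq_trans (leq_addl _ _).
  by apply: leq_trans (max_card _) _; rewrite card_mx mul1n.
case: (leqP (\rank A) D) => [AD|DA']; last first.
  rewrite eq_card0 // => v; rewrite inE; apply/negbTE; rewrite -ltnNge.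
  exact: leq_trans DA' (rank_addr v).
have ->: D = \rank A by apply/eqP; rewrite eqn_leq AD DA.
rewrite addn0; apply: leq_trans (card_rowspace_leq A).
apply: subset_leq_card; apply/subsetP => v; rewrite !inE => vA.
have [_] := mxrank_leqif_sup (addsmxSr v A).
by rewrite addsmxE eqn_leq vA rank_addr addsmx_sub => /esym /andP[].
Qed.

Lemma nb_low_rank_recS m n D :
  (nb_low_rank m.+1 n D <= q ^ D * nb_low_rank m n D +
     q ^ n * #|[set A : 'M[F]_(m, n) | (\rank A < D)%N]|)%N.
Proof.
pose P (u : 'M[F]_(m, n) * 'rV[F]_n) := (\rank (col_mx u.2 u.1) <= D)%N.
have split_top : (nb_low_rank (1 + m) n D <= #|[set u | P u]|)%N.
  have inj : injective (fun M : 'M[F]_(1 + m, n) => (dsubmx M, usubmx M)).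
    by move=> M1 M2 [e1 e2]; rewrite -(vsubmxK M1) -(vsubmxK M2) e1 e2.
  rewrite /nb_low_rank -(card_imset _ inj); apply: subset_leq_card.
  apply/subsetP => u /imsetP[M]; rewrite inE => hM ->.
  by rewrite inE /P /= vsubmxK.
apply: leq_trans split_top _.
rewrite -sum1dep_card (eq_bigl (fun u => true && P u)) //.
rewrite -(pair_big_dep xpredT (fun A v => P (A, v)) (fun _ _ => 1%N)) /=.
under eq_bigr => A _ do rewrite sum1dep_card /P /=.
apply: leq_trans; first by apply: leq_sum => A _; apply: card_col_mx_rank_leq.
rewrite big_split /= -!big_mkcond !sum_nat_cond_const.
by rewrite [X in (X + _)%N]mulnC [X in (_ + X)%N]mulnC.
Qed.

Lemma nb_low_rank_leq_mul m n D : (D <= m)%N ->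
  (nb_low_rank m n D * q ^ (D * D) <= 2 ^ m * q ^ (n * D + D * m))%N.
Proof.
have q_gt0 : (0 < q)%N by apply/card_gt0P; exists 0.
elim: m D => [|m IH] D.
  rewrite leqn0 => /eqP ->; rewrite !muln0 expn0 !muln1.
  by apply: leq_trans (nb_low_rank_leq_card 0 n 0) _; rewrite mul0n.
rewrite leq_eqVlt ltnS => /orP[/eqP ->|Dm].
  apply: leq_trans (leq_mul (nb_low_rank_leq_card _ _ _) (leqnn _)) _.
  rewrite -expnD -[X in (X <= _)%N]mul1n leq_mul ?expn_gt0 ?leq_pexp2l //; lia.
apply: leq_trans (leq_mul (nb_low_rank_recS m n D) (leqnn _)) _.
rewrite mulnDl expnS mul2n -addnn mulnDl leq_add //.
  rewrite -mulnA; apply: leq_trans (leq_mul (leqnn _) (IH D Dm)) _.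
  rewrite mulnCA -expnD leq_mul2l leq_pexp2l ?orbT //; lia.
case: D Dm => [|D] Dm.
  by rewrite eq_card0 ?muln0 ?mul0n // => A; rewrite inE ltn0.
have -> : #|[set A : 'M[F]_(m, n) | (\rank A < D.+1)%N]| = nb_low_rank m n D.
  by apply: eq_card => A; rewrite !inE ltnS.
have -> : (D.+1 * D.+1 = D * D + D.*2.+1)%N by rewrite -addnn; lia.
rewrite expnD mulnA -[(_ * _ * q ^ (D * D))%N]mulnA.
apply: leq_trans (leq_mul (leq_mul (leqnn _) (IH D (ltnW Dm))) (leqnn _)) _.
rewrite mulnCA -mulnA -!expnD leq_mul2l leq_pexp2l ?orbT //.
rewrite -addnn; nia.
Qed.

Lemma nb_low_rank_leq m n D : (D <= m)%N ->
  (nb_low_rank m n D <= 2 ^ m * q ^ (D * (n + m - D)))%N.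
Proof.
move=> Dm; have q_gt0 : (0 < q)%N by apply/card_gt0P; exists 0.
rewrite -(@leq_pmul2r (q ^ (D * D))) ?expn_gt0 ?q_gt0 //.
apply: leq_trans (nb_low_rank_leq_mul n Dm) _.
rewrite -mulnA -expnD; apply: leq_mul => //; apply: leq_pexp2l => //; nia.
Qed.

End LowRankMatrices.

Definition in_flat (F : finFieldType) n m (T : {set 'rV[F]_n}) : bool :=
  [exists x : 'rV[F]_n, exists L : 'M[F]_n,
     (\rank L <= m)%N && (T \subset affine_sub x L)].

Lemma card_flat_sets_leq (F : finFieldType) n m r : (0 < r)%N ->
  (#|[set T : {set 'rV[F]_n} | (#|T| == r) && in_flat m T]| <=
   #|F| ^ n * nb_low_rank F r.-1 n m)%N.
Proof.
move=> r_gt0.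
pose f (T : {set 'rV[F]_n}) := (nth 0 (enum T) 0,
  \matrix_(i < r.-1) (nth 0 (enum T) i.+1 - nth 0 (enum T) 0)).
rewrite -(card_in_imset (f := f)); last first.
  move=> T1 T2; rewrite !inE => /andP[/eqP T1_card _] /andP[/eqP T2_card _] [e0 eM].
  have enumE : enum T1 = enum T2.
    apply: (@eq_from_nth _ 0); first by rewrite -!cardE T1_card T2_card.
    move=> [|i]; rewrite -cardE T1_card => ir; first exact: e0.
    have ir' : (i < r.-1)%N by lia.
    have := congr1 (row (Ordinal ir')) eM; rewrite /= !rowK e0.
    by move=> /(congr1 (fun v => v + nth 0 (enum T2) 0)); rewrite !subrK.
  by apply/setP => x; rewrite -(mem_enum T1) enumE mem_enum.
apply: (@leq_trans #|setX [set: 'rV[F]_n]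
                          [set M : 'M[F]_(r.-1, n) | (\rank M <= m)%N]|).
  apply: subset_leq_card; apply/subsetP => u /imsetP[T].
  rewrite inE => /andP[/eqP T_card /existsP[x /existsP[L /andP[rank_L T_sub]]]] ->.
  rewrite !inE /=; apply: leq_trans rank_L; apply: mxrankS.
  have T_diff j : (j < r)%N -> (nth 0 (enum T) j - x <= L)%MS.
    move=> jr; have : nth 0 (enum T) j \in T by rewrite -mem_enum mem_nth // -cardE T_card.
    by move/(subsetP T_sub); rewrite inE.
  apply/row_subP => i; rewrite rowK.
  rewrite -[X in (X <= _)%MS](subrKA x) -[x - _]opprB.
  by rewrite addmx_sub ?eqmx_opp ?T_diff //; have := ltn_ord i; lia.
by rewrite cardsX cardsT card_mx mul1n.
Qed.

Lemma bin_subn_mul_expn_leq N s r : (r <= s)%N ->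
  ('C(N - r, s - r) * (N - r) ^ r <= 'C(N, s) * s ^ r)%N.
Proof.
have leq_expn2r a b e : (a <= b)%N -> (a ^ e <= b ^ e)%N.
  by move=> ab; elim: e => // e IH; rewrite !expnS leq_mul.
elim: r => [|r IH] rs; first by rewrite !subn0 !expn0 !muln1.
have bin_rec := mul_bin_diag (N - r) (s - r.+1).
rewrite -subnS subnSK // in bin_rec.
apply: (@leq_trans ('C(N - r.+1, s - r.+1) * (N - r) * (N - r) ^ r)%N).
  rewrite -mulnA leq_mul2l expnS leq_mul ?orbT ?leq_expn2r ?leq_sub2l //.
rewrite (mulnC _ (N - r)%N) bin_rec -mulnA.
apply: (@leq_trans ((s - r) * ('C(N, s) * s ^ r))%N).
  by rewrite leq_mul2l IH ?orbT // ltnW.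
by rewrite expnS [X in (_ <= X)%N]mulnCA leq_mul2r leq_subr orbT.
Qed.

Lemma card_supersets_leq (T : finType) (X : {set T}) r s : #|X| = r ->
  (#|[set S : {set T} | (#|S| == s) && (X \subset S)]| * (#|T| - r) ^ r <=
   'C(#|T|, s) * s ^ r)%N.
Proof.
move=> X_card; case: (leqP r s) => [rs|sr]; last first.
  rewrite eq_card0 ?mul0n // => S; rewrite inE; apply/negP => /andP[/eqP S_card XS].
  by have := subset_leq_card XS; rewrite S_card X_card leqNgt sr.
apply: leq_trans (bin_subn_mul_expn_leq _ rs); rewrite leq_mul2r; apply/orP; right.
rewrite -(card_in_imset (f := fun S => S :\: X)); last first.
  move=> S1 S2; rewrite !inE => /andP[_ XS1] /andP[_ XS2] S12.
  apply/setP => x; case Xx: (x \in X); first by rewrite (subsetP XS1) ?(subsetP XS2).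
  by have := congr1 (fun A : {set T} => x \in A) S12; rewrite /= !inE Xx.
have <- : #|~: X| = (#|T| - r)%N by rewrite -X_card -(cardsC X) addKn.
rewrite -cards_draws; apply: subset_leq_card; apply/subsetP => A /imsetP[S].
rewrite inE => /andP[/eqP S_card XS] ->.
by rewrite inE cardsD (setIidPr XS) S_card X_card eqxx andbT setDE subsetIr.
Qed.

Lemma exists_set_avoiding (T : finType) (bad : pred {set T}) r s :
  (s <= #|T|)%N ->
  (#|[set X : {set T} | (#|X| == r) && bad X]| * s ^ r < (#|T| - r) ^ r)%N ->
  exists S : {set T}, #|S| = s /\
    forall X : {set T}, X \subset S -> #|X| = r -> ~~ bad X.
Proof.
move=> sT bad_lt.
pose Bad := [set X : {set T} | (#|X| == r) && bad X].
pose Hit := \bigcup_(X in Bad) [set S : {set T} | (#|S| == s) && (X \subset S)].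
have Hit_lt : (#|Hit| < 'C(#|T|, s))%N.
  have pos : (0 < (#|T| - r) ^ r)%N by apply: leq_ltn_trans bad_lt.
  rewrite -(ltn_pmul2r pos).
  apply: (@leq_ltn_trans (#|Bad| * ('C(#|T|, s) * s ^ r))).
    apply: leq_trans (leq_mul (card_big_setU _ _ _) (leqnn _)) _.
    rewrite big_distrl /= -sum_nat_const; apply: leq_sum => X.
    by rewrite inE => /andP[/eqP /card_supersets_leq].
  by rewrite mulnCA ltn_pmul2l // bin_gt0.
have : ~~ ([set S : {set T} | #|S| == s] \subset Hit).
  by apply/negP => /subset_leq_card; rewrite card_draws leqNgt Hit_lt.
case/subsetPn => S; rewrite inE => /eqP S_card S_free.
exists S; split => // X XS X_card; apply: contra S_free => X_bad.
by apply/bigcupP; exists X; rewrite inE ?X_card ?S_card ?eqxx.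
Qed.

Lemma exists_flat_free_set (F : finFieldType) n m r s :
  (0 < r)%N -> (m <= r.-1)%N ->
  (#|F| ^ n * (2 ^ r.-1 * #|F| ^ (m * (n + r.-1 - m))) * s ^ r <
   (#|F| ^ n - r) ^ r)%N ->
  exists S : {set 'rV[F]_n}, #|S| = s /\
    forall x (L : 'M[F]_n), (\rank L <= m)%N -> (#|affine_sub x L :&: S| < r)%N.
Proof.
move=> r_gt0 mr count_lt.
have q_gt0 : (0 < #|F|)%N by apply/card_gt0P; exists 0.
have cardV : #|'rV[F]_n| = (#|F| ^ n)%N by rewrite card_mx mul1n.
have s_le : (s <= #|'rV[F]_n|)%N.
  rewrite cardV -(leq_exp2r _ _ r_gt0); apply: ltnW.
  apply: leq_ltn_trans _ (leq_trans count_lt _); last by rewrite leq_exp2r // leq_subr.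
  by rewrite leq_pmull // !muln_gt0 !expn_gt0 q_gt0.
have [|S [S_card S_free]] := @exists_set_avoiding _ (in_flat m) r s s_le.
  rewrite cardV; apply: (leq_ltn_trans _ count_lt); rewrite leq_mul2r; apply/orP; right.
  exact: leq_trans (card_flat_sets_leq F n m r_gt0) (leq_mul (leqnn _) (nb_low_rank_leq F n mr)).
exists S; split => // x L rank_L; rewrite ltnNge; apply/negP.
case/card_geqP => X [X_uniq X_size X_sub].
have X_in y : y \in X -> y \in affine_sub x L /\ y \in S.
  by move/X_sub; rewrite inE => /andP[].
suff: in_flat m [set y in X].
  apply/negP; apply: S_free; last by rewrite cardsE (card_uniqP X_uniq).
  by apply/subsetP => y; rewrite inE => /X_in[].
apply/existsP; exists x; apply/existsP; exists L; rewrite rank_L /=.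
by apply/subsetP => y; rewrite inE => /X_in[].
Qed.

Lemma truncn_powR_expn_leq (R : realType) (p a r K : nat) (eps : R) :
  (0 < p)%N -> K%:R <= eps * r%:R ->
  ((Num.truncn (p%:R `^ (a%:R - eps))) ^ r * p ^ K <= p ^ (a * r))%N.
Proof.
move=> p_gt0 K_le; set P := p%:R `^ (a%:R - eps).
rewrite -(ler_nat R) natrM !natrX.
apply: (@le_trans _ _ (P ^+ r * p%:R ^+ K)).
  by rewrite ler_wpM2r ?exprn_ge0 // lerXn2r ?nnegrE ?truncn_le ?powR_ge0.
rewrite /P -!powR_mulrn // -powRrM -powRD; last by rewrite pnatr_eq0 -lt0n p_gt0 implybT.
by apply: ler_powR; [rewrite ler1n | rewrite natrM mulrBl; lra].
Qed.

Lemma half_le_truncn (R : archiRealFieldType) (x : R) :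
  1 <= x -> x / 2 <= (Num.truncn x)%:R.
Proof.
move=> x_ge1; have := truncnS_gt x; rewrite -addn1 natrD.
have : 1 <= (Num.truncn x)%:R :> R by rewrite ler1n truncn_gt0.
lra.
Qed.

(* Multiplied by [2 ^ r * p ^ (k (d - k + 1))], the left-hand side is at most
   [2 ^ (2 r - 1) p ^ ((d - 1) r + k (d - k + 1) - k)] and, as [2 r <= p ^ (d - 1)],
   the right-hand side is at least [p ^ ((d - 1) r + k (d - k + 1))];
   conclude by [2 ^ (2 r - 1) < 4 ^ r <= p <= p ^ k]. *)
Lemma flat_free_count_lt (p d k r s : nat) :
  (0 < k)%N -> (k < d)%N -> (0 < r)%N -> (4 ^ r <= p)%N ->
  (s ^ r * p ^ (k * (d - k + 1)) <= p ^ ((d - k) * r))%N ->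
  (p ^ (d - 1) * (2 ^ r.-1 * p ^ ((k - 1) * (d - 1 + r.-1 - (k - 1)))) * s ^ r <
   (p ^ (d - 1) - r) ^ r)%N.
Proof.
move=> k_gt0 kd r_gt0 p_ge s_bound.
have p_gt0 : (0 < p)%N by apply: (leq_trans _ p_ge); rewrite expn_gt0.
have pow4 : (4 ^ r = 2 ^ r * 2 ^ r)%N by rewrite -expnMn.
have p_le e : (0 < e)%N -> (p <= p ^ e)%N.
  by move=> e_gt0; rewrite -{1}[p]expn1 leq_pexp2l.
have two_r : (2 * r <= p ^ (d - 1))%N.
  apply: (leq_trans _ (p_le (d - 1)%N _)); last by lia.
  apply: (leq_trans _ p_ge); rewrite pow4; apply: leq_mul.
  - by rewrite -{1}[2%N]expn1 leq_pexp2l.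
  - exact: ltnW (ltn_expl _ _).
have half : (p ^ ((d - 1) * r) <= 2 ^ r * (p ^ (d - 1) - r) ^ r)%N.
  by rewrite expnM -expnMn leq_exp2r //; lia.
have small : (2 ^ r * 2 ^ r.-1 < p ^ k)%N.
  apply: (leq_trans _ (p_le k k_gt0)); apply: (leq_trans _ p_ge).
  by rewrite -expnD pow4 -expnD ltn_exp2l //; lia.
have exps : (d - 1 + (k - 1) * (d - 1 + r.-1 - (k - 1)) + (d - k) * r + k =
             (d - 1) * r + k * (d - k + 1))%N.
  by clear -k_gt0 kd r_gt0; nia.
set K := (k * (d - k + 1))%N; set E := ((k - 1) * (d - 1 + r.-1 - (k - 1)))%N.
rewrite -(@ltn_pmul2l (2 ^ r * p ^ K)) ?muln_gt0 ?expn_gt0 ?p_gt0 //.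
apply: (@leq_ltn_trans (2 ^ r * 2 ^ r.-1 * p ^ (d - 1 + E + (d - k) * r))).
  have -> : (2 ^ r * p ^ K * (p ^ (d - 1) * (2 ^ r.-1 * p ^ E) * s ^ r) =
             2 ^ r * 2 ^ r.-1 * (p ^ (d - 1) * p ^ E * (s ^ r * p ^ K)))%N by ring.
  by rewrite !expnD !leq_mul2l s_bound !orbT.
apply: (@leq_trans (p ^ k * p ^ (d - 1 + E + (d - k) * r))).
  by rewrite ltn_pmul2r ?expn_gt0 ?p_gt0.
rewrite -expnD [(k + _)%N]addnC exps expnD.
have -> : (2 ^ r * p ^ K * (p ^ (d - 1) - r) ^ r =
           p ^ K * (2 ^ r * (p ^ (d - 1) - r) ^ r))%N by ring.
by rewrite mulnC leq_mul2l half orbT.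
Qed.

Theorem lemma6 (R : realType) (d k : nat) (eps : R) :
  (2 <= k)%N -> (k <= d - 2)%N -> 0 < eps < 1 ->
  exists p0 : nat, (0 < p0)%N /\
    forall p : nat, prime p -> (p0 <= p)%N ->
      exists S : {set 'rV['F_p]_(d - 1)},
        (p%:R `^ ((d - k)%:R - eps) / 2 <= (#|S|%:R : R)) /\
        forall A : {set 'rV['F_p]_(d - 1)},
          is_affine_subspace_dim (k - 1) A ->
          (#|A :&: S|%:Z <= Num.ceil ((k * (d - k + 1))%:R / eps) - 1)%R.
Proof.
move=> k_ge2 k_le /andP[eps_gt0 eps_lt1].
set K := (k * (d - k + 1))%N.
have [r r_def] : exists r : nat, Num.ceil (K%:R / eps) = r%:Z.
  exists `|Num.ceil (K%:R / eps)|%N; rewrite gez0_abs // ceil_ge0.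
  by rewrite (lt_le_trans (ltrN10 R)) // divr_ge0 // ltW.
have K_le : K%:R <= eps * r%:R.
  by rewrite mulrC -ler_pdivrMr // [r%:R]pmulrn -r_def ceil_ge.
have k_le_r : (k <= r)%N.
  rewrite (@leq_trans K) ?leq_pmulr ?addn1 // -(ler_nat R) (le_trans K_le) //.
  by rewrite ler_piMl ?ler0n // ltW.
exists (4 ^ r)%N; split => [|p p_prime p_ge]; first by rewrite expn_gt0.
have p_gt0 := prime_gt0 p_prime.
set s := Num.truncn (p%:R `^ ((d - k)%:R - eps) : R).
have s_bound : (s ^ r * p ^ K <= p ^ ((d - k) * r))%N.
  exact: truncn_powR_expn_leq p_gt0 K_le.
have [|||S [S_card S_free]] := @exists_flat_free_set 'F_p (d - 1) (k - 1) r s; try lia.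
  by rewrite card_Fp //; apply: flat_free_count_lt => //; lia.
exists S; split.
  rewrite S_card half_le_truncn // -[leLHS](powRr0 p%:R) ler_powR ?ler1n //.
  have : 2%:R <= (d - k)%:R :> R by rewrite ler_nat; lia.
  lra.
move=> A [x [L [rank_L ->]]]; rewrite r_def -ltzD1 subrK ltz_nat.
by rewrite S_free ?rank_L.
Qed.
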